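(* $\operatorname{BSR}(5,4)\ge 11$. In particular, the biquadratic form \[P(\mathbf{x},\mathbf{y})=x_1^2y_1^2+x_1^2y_2^2+x_1^2y_3^2+x_2^2y_1^2+x_2^2y_4^2+x_3^2y_2^2+x_3^2y_4^2+x_4^2y_3^2+x_4^2y_4^2+x_5^2y_1^2+(x_2y_3+x_5y_4)^2\] on $\mathbb{R}^5\times\mathbb{R}^4$ has SOS rank $11$ (i.e., it cannot be written as a sum of fewer than 11 squares of bilinear forms).
   Context: An $m\times n$ biquadratic form is a polynomial $P(\mathbf{x},\mathbf{y})=\sum_{i,k=1}^m\sum_{j,l=1}^n a_{ijkl}x_ix_ky_jy_l$ with real coefficients, $\mathbf{x}\in\mathbb{R}^m$, $\mathbf{y}\in\mathbb{R}^n$. It is SOS if $P=\sum_{p=1}^r f_p^2$ for some real bilinear forms $f_p(\mathbf{x},\mathbf{y})=\sum_{i,j}c^{(p)}_{ij}x_iy_j$; the least such $r$ is the SOS rank $\operatorname{sos}(P)$. $\operatorname{BSR}(m,n)$ is the maximum of $\operatorname{sos}(P)$ over all $m\times n$ SOS biquadratic forms $P$. *)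

From HB Require Import structures.
From mathcomp Require Import all_boot all_order all_algebra.
From mathcomp Require Import reals.
Set Implicit Arguments. Unset Strict Implicit. Unset Printing Implicit Defensive.
Import Order.TTheory GRing.Theory Num.Theory.
Local Open Scope ring_scope.

(* Vectors x in R^m are functions 'I_m -> R; indices are 0-based
   (x_1 of the paper is x (inord 0), etc.). *)

Definition bilin (R : realType) (m n : nat) (C : 'M[R]_(m, n))
  (x : 'I_m -> R) (y : 'I_n -> R) : R :=
  \sum_(i < m) \sum_(j < n) C i j * x i * y j.

Definition is_biquadratic (R : realType) (m n : nat)
  (P : ('I_m -> R) -> ('I_n -> R) -> R) : Prop :=
  exists a : 'I_m -> 'I_n -> 'I_m -> 'I_n -> R,
    forall x y, P x y =
      \sum_(i < m) \sum_(k < m) \sum_(j < n) \sum_(l < n)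
         a i j k l * x i * x k * y j * y l.

Definition is_sos_r (R : realType) (m n : nat)
  (P : ('I_m -> R) -> ('I_n -> R) -> R) (r : nat) : Prop :=
  exists C : 'I_r -> 'M[R]_(m, n),
    forall x y, P x y = \sum_(p < r) (bilin (C p) x y) ^+ 2.

Definition is_sos (R : realType) (m n : nat)
  (P : ('I_m -> R) -> ('I_n -> R) -> R) : Prop := exists r, is_sos_r P r.

Definition sos_rank_ge (R : realType) (m n : nat)
  (P : ('I_m -> R) -> ('I_n -> R) -> R) (k : nat) : Prop :=
  forall r, (r < k)%N -> ~ is_sos_r P r.

Definition BSR_ge (R : realType) (m n k : nat) : Prop :=
  exists P : ('I_m -> R) -> ('I_n -> R) -> R,
    [/\ is_biquadratic P, is_sos P & sos_rank_ge P k].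

Definition P54 (R : realType) (x : 'I_5 -> R) (y : 'I_4 -> R) : R :=
  let x1 := x (inord 0) in let x2 := x (inord 1) in let x3 := x (inord 2) in
  let x4 := x (inord 3) in let x5 := x (inord 4) in
  let y1 := y (inord 0) in let y2 := y (inord 1) in let y3 := y (inord 2) in
  let y4 := y (inord 3) in
  x1^+2 * y1^+2 + x1^+2 * y2^+2 + x1^+2 * y3^+2 + x2^+2 * y1^+2
  + x2^+2 * y4^+2 + x3^+2 * y2^+2 + x3^+2 * y4^+2 + x4^+2 * y3^+2
  + x4^+2 * y4^+2 + x5^+2 * y1^+2 + (x2 * y3 + x5 * y4) ^+ 2.

From HB Require Import structures.
From mathcomp Require Import all_boot all_order all_algebra.
From mathcomp Require Import reals.
From mathcomp Require Import ring lra.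
Set Implicit Arguments. Unset Strict Implicit. Unset Printing Implicit Defensive.
Import Order.TTheory GRing.Theory Num.Theory.
Local Open Scope ring_scope.

(* A representation P = sum_p f_p^2 with f_p = sum_ij c^p_ij x_i y_j attaches
   to each cell (i, j) the vector v_ij = (c^p_ij)_p of R^r.  Polarizing P at
   x = e_i +- e_k, y = e_j +- e_l shows that <v_ij, v_kl> + <v_il, v_kj> does
   not depend on the representation, so it can be read off the obvious
   representation of P by 11 squares.  Cells whose monomial x_i^2 y_j^2 is
   absent from P carry the zero vector, the two cells of the square
   (x2 y3 + x5 y4)^2 carry the same unit vector, and then one polarization
   identity per pair shows that the vectors of the 11 cells occurring in P
   (with x5 y4 identified with x2 y3) are orthonormal, whence r >= 11. *)

Section UnitVectors.
Variable R : comPzRingType.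

Definition unit_vec k (i : 'I_k) : 'I_k -> R := fun a => (a == i)%:R.

Definition test_vec k (i j : 'I_k) (t : R) : 'I_k -> R :=
  fun a => unit_vec i a + t * unit_vec j a.

Lemma sum_mul_unit_vec k (F : 'I_k -> R) i :
  \sum_(a < k) F a * unit_vec i a = F i.
Proof.
rewrite (bigD1 i) //= /unit_vec eqxx mulr1 big1 ?addr0 // => a /negbTE ->.
by rewrite mulr0.
Qed.

Lemma sum_mul_test_vec k (F : 'I_k -> R) i j t :
  \sum_(a < k) F a * test_vec i j t a = F i + t * F j.
Proof.
under eq_bigr do rewrite mulrDr mulrCA.
by rewrite big_split /= sum_mul_unit_vec -mulr_sumr sum_mul_unit_vec.
Qed.

Lemma sum_mul_eq_nat N (a b : nat) :
  \sum_(q < N) (a == q)%:R * (b == q)%:R = ((a == b) && (a < N)%N)%:R :> R.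
Proof.
have [aN | Na] := ltnP a N; last first.
  rewrite andbF big1 // => q _.
  by rewrite gtn_eqF ?mul0r // (leq_trans (ltn_ord q)).
have eq_a q : (a == q) = (q == Ordinal aN).
  by rewrite eq_sym; apply/eqP/eqP => [qa | ->] //; exact: val_inj.
under eq_bigr do rewrite eq_a mulrC.
by rewrite (sum_mul_unit_vec (fun q : 'I_N => (b == q)%:R)) eq_sym andbT.
Qed.

End UnitVectors.

Arguments unit_vec {R k} i.
Arguments test_vec {R k} i j t.

Lemma sum_ord_iota (V : nmodType) n (F : nat -> V) :
  \sum_(i < n) F i = \sum_(i <- iota 0 n) F i.
Proof. by rewrite -(big_mkord xpredT) /index_iota subn0. Qed.

Section BilinearForms.
Variables (R : realType) (m n : nat).

Lemma bilin_unit_vec (C : 'M[R]_(m, n)) i j :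
  bilin C (unit_vec i) (unit_vec j) = C i j.
Proof.
rewrite /bilin.
under eq_bigr => a _ do under eq_bigr do rewrite -mulrA mulrCA.
under eq_bigr do rewrite -mulr_sumr sum_mul_unit_vec mulrC.
exact: sum_mul_unit_vec.
Qed.

Lemma bilin_test_vec (C : 'M[R]_(m, n)) i k t j l s :
  bilin C (test_vec i k t) (test_vec j l s) =
  C i j + s * C i l + t * C k j + t * s * C k l.
Proof.
rewrite /bilin.
under eq_bigr => a _.
  under eq_bigr do rewrite -mulrA mulrCA.
  rewrite -mulr_sumr sum_mul_test_vec mulrC.
  over.
by rewrite /= sum_mul_test_vec; ring.
Qed.

Definition sos_repr r (P : ('I_m -> R) -> ('I_n -> R) -> R)
    (C : 'I_r -> 'M[R]_(m, n)) :=
  forall x y, P x y = \sum_(p < r) bilin (C p) x y ^+ 2.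

Lemma sos_r_biquadratic (P : ('I_m -> R) -> ('I_n -> R) -> R) r :
  is_sos_r P r -> is_biquadratic P.
Proof.
case=> C sosC; exists (fun i j k l => \sum_(p < r) C p i j * C p k l) => x y.
rewrite sosC.
transitivity (\sum_(p < r) \sum_(i < m) \sum_(k < m) \sum_(j < n) \sum_(l < n)
   C p i j * C p k l * x i * x k * y j * y l).
  apply: eq_bigr => p _; rewrite expr2 /bilin big_distrlr /=.
  apply: eq_bigr => i _; apply: eq_bigr => k _.
  rewrite big_distrlr /=; apply: eq_bigr => j _; apply: eq_bigr => l _; ring.
rewrite exchange_big /=; apply: eq_bigr => i _.
rewrite exchange_big /=; apply: eq_bigr => k _.
rewrite exchange_big /=; apply: eq_bigr => j _.
by rewrite exchange_big /=; apply: eq_bigr => l _; rewrite !mulr_suml.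
Qed.

End BilinearForms.

Lemma bilin_mx_iota (R : realType) m n (f : nat -> nat -> R) x y :
  bilin (\matrix_(i < m.+1, j < n.+1) f i j) x y =
  \sum_(i <- iota 0 m.+1) \sum_(j <- iota 0 n.+1)
    f i j * x (inord i) * y (inord j).
Proof.
rewrite -sum_ord_iota; apply: eq_bigr => i _.
by rewrite -sum_ord_iota; apply: eq_bigr => j _; rewrite mxE !inord_val.
Qed.

Section Gram.
Variables (R : realType) (m n r : nat) (C : 'I_r -> 'M[R]_(m, n)).

Definition gram (a b : 'I_m * 'I_n) : R :=
  \sum_(p < r) C p a.1 a.2 * C p b.1 b.2.

Lemma gramC a b : gram a b = gram b a.
Proof. by apply: eq_bigr => p _; rewrite mulrC. Qed.

Lemma gram_diag_eq0 a b : gram a a = 0 -> gram a b = 0 /\ gram b a = 0.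
Proof.
move/eqP; rewrite psumr_eq0 => [/allP Ca0|p _]; last by rewrite -expr2 sqr_ge0.
have {}Ca0 p : C p a.1 a.2 = 0.
  by apply/eqP; rewrite -sqrf_eq0 expr2; exact: Ca0 (mem_index_enum _).
by split; apply: big1 => p _; rewrite Ca0 ?mul0r ?mulr0.
Qed.

Lemma gram_dist_eq0 a b :
  gram a a + gram b b - 2 * gram a b = 0 -> forall c, gram c a = gram c b.
Proof.
have -> : gram a a + gram b b - 2 * gram a b =
          \sum_(p < r) (C p a.1 a.2 - C p b.1 b.2) ^+ 2.
  rewrite /gram mulr_sumr -big_split -sumrB /=; apply: eq_bigr => p _; ring.
move/eqP; rewrite psumr_eq0 => [/allP Cab|p _]; last exact: sqr_ge0.
have {}Cab p : C p a.1 a.2 = C p b.1 b.2.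
  by apply/eqP; rewrite -subr_eq0 -sqrf_eq0; exact: Cab (mem_index_enum _).
by move=> c; apply: eq_bigr => p _; rewrite Cab.
Qed.

Lemma gram_diag P : sos_repr P C ->
  forall i j, gram (i, j) (i, j) = P (unit_vec i) (unit_vec j).
Proof.
by move=> sosC i j; rewrite sosC; apply: eq_bigr => p _; rewrite bilin_unit_vec.
Qed.

Definition polar (P : ('I_m -> R) -> ('I_n -> R) -> R) i j k l :=
  (P (test_vec i k 1) (test_vec j l 1) - P (test_vec i k (-1)) (test_vec j l 1)
   - P (test_vec i k 1) (test_vec j l (-1))
   + P (test_vec i k (-1)) (test_vec j l (-1))) / 8.

Lemma gram_polar P : sos_repr P C ->
  forall i j k l, gram (i, j) (k, l) + gram (i, l) (k, j) = polar P i j k l.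
Proof.
move=> sosC i j k l; rewrite /polar !sosC.
rewrite /gram -big_split -!sumrB -big_split /= mulr_suml.
by apply: eq_bigr => p _; rewrite !bilin_test_vec; field.
Qed.

End Gram.

Section GramInvariance.
Variables (R : realType) (m n : nat) (P : ('I_m -> R) -> ('I_n -> R) -> R).
Variables (r s : nat) (C : 'I_r -> 'M[R]_(m, n)) (D : 'I_s -> 'M[R]_(m, n)).
Hypotheses (sosC : sos_repr P C) (sosD : sos_repr P D).

Lemma gram_diag_eq a : gram C a a = gram D a a.
Proof. by case: a => i j; rewrite (gram_diag sosC) (gram_diag sosD). Qed.

Lemma gram_polar_eq i j k l :
  gram C (i, j) (k, l) + gram C (i, l) (k, j) =
  gram D (i, j) (k, l) + gram D (i, l) (k, j).
Proof. by rewrite (gram_polar sosC) (gram_polar sosD). Qed.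

End GramInvariance.

Lemma orthonormal_rows_leq (F : fieldType) k r (U : 'M[F]_(k, r)) :
  U *m U^T = 1%:M -> (k <= r)%N.
Proof.
move=> UUt; have := mxrankM_maxl U U^T; rewrite UUt mxrank1 => /leq_trans.
by apply; exact: rank_leq_col.
Qed.

Lemma sos_rank_ge_orthonormal_cells (R : realType) m n
    (P : ('I_m -> R) -> ('I_n -> R) -> R) k (cell : 'I_k -> 'I_m * 'I_n) :
  (forall r (C : 'I_r -> 'M[R]_(m, n)), sos_repr P C ->
     forall s t, gram C (cell s) (cell t) = (s == t)%:R) ->
  sos_rank_ge P k.
Proof.
move=> orth r ltrk [C sosC].
pose U := \matrix_(s < k, p < r) C p (cell s).1 (cell s).2.
have UUt : U *m U^T = 1%:M.
  apply/matrixP => s t; rewrite !mxE -(orth _ _ sosC).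
  by apply: eq_bigr => p _; rewrite !mxE.
by have := orthonormal_rows_leq UUt; rewrite leqNgt ltrk.
Qed.

(* cls54 i j is the (0-based) index of the square of P54 in which the
   monomial x_i y_j occurs, and 11 if it occurs in none. *)
Definition cls54 (i j : nat) : nat :=
  match i, j with
  | 0, 0 => 0 | 0, 1 => 1 | 0, 2 => 2 | 1, 0 => 3 | 1, 3 => 4 | 2, 1 => 5
  | 2, 3 => 6 | 3, 2 => 7 | 3, 3 => 8 | 4, 0 => 9 | 1, 2 | 4, 3 => 10
  | _, _ => 11
  end.

Definition sq54 (R : realType) (q : 'I_11) : 'M[R]_(5, 4) :=
  \matrix_(i, j) (cls54 i j == q)%:R.

Lemma sos_repr_sq54 (R : realType) : sos_repr (@P54 R) (@sq54 R).
Proof.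
move=> x y; rewrite /sq54.
under eq_bigr => q _ do
  rewrite (bilin_mx_iota (fun a b => (cls54 a b == q)%:R)).
(* sums over the explicit lists [iota 0 _] evaluate by unlocking *)
by rewrite !big_ord_recr big_ord0 unlock /= /P54 /=; ring.
Qed.

Lemma gram_sq54 (R : realType) (a b : 'I_5 * 'I_4) :
  gram (@sq54 R) a b =
  ((cls54 a.1 a.2 == cls54 b.1 b.2) && (cls54 a.1 a.2 < 11)%N)%:R.
Proof.
by rewrite /gram; under eq_bigr do rewrite !mxE; rewrite sum_mul_eq_nat.
Qed.

Local Notation cell i j := (@Ordinal 5 i isT, @Ordinal 4 j isT).

Definition cells54 (s : 'I_11) : 'I_5 * 'I_4 :=
  nth (cell 0 0) [:: cell 0 0; cell 0 1; cell 0 2; cell 1 0; cell 1 3; cell 2 1;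
                     cell 2 3; cell 3 2; cell 3 3; cell 4 0; cell 1 2] s.

Section P54Gram.
Variables (R : realType) (r : nat) (C : 'I_r -> 'M[R]_(5, 4)).
Hypothesis sosC : sos_repr (@P54 R) C.

Local Notation G := (gram C).

Lemma gram54_polar (a b : 'I_5 * 'I_4) :
  G a b + G (a.1, b.2) (b.1, a.2) =
  gram (@sq54 R) a b + gram (@sq54 R) (a.1, b.2) (b.1, a.2).
Proof.
case: a b => [i j] [k l].
exact: gram_polar_eq sosC (@sos_repr_sq54 R) i j k l.
Qed.

Lemma gram54_eq0 (a b : 'I_5 * 'I_4) :
  cls54 a.1 a.2 = 11 -> G a b = 0 /\ G b a = 0.
Proof.
move=> a11; apply: gram_diag_eq0.
by rewrite (gram_diag_eq sosC (@sos_repr_sq54 R)) gram_sq54 a11.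
Qed.

Lemma gram54_alias c : G c (cell 4 3) = G c (cell 1 2).
Proof.
apply: gram_dist_eq0.
rewrite !(gram_diag_eq sosC (@sos_repr_sq54 R)) !gram_sq54 /=.
have [z _] := @gram54_eq0 (cell 4 2) (cell 1 3) erefl.
by have := gram54_polar (cell 4 3) (cell 1 2); rewrite !gram_sq54 /=; lra.
Qed.

Lemma gram54_cells s t : G (cells54 s) (cells54 t) = (s == t)%:R.
Proof.
wlog st : s t / (s <= t)%N.
  by move=> le; have [/le // | /ltnW/le] := leqP s t; rewrite gramC eq_sym.
(* Pairs whose polarization partner is again a pair of listed cells: they are
   settled through the alias (4,3) ~ (1,2). *)
have o1 : G (cell 0 0) (cell 1 2) = 0.
  rewrite -gram54_alias; have [z _] := @gram54_eq0 (cell 0 3) (cell 4 0) erefl.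
  by have := gram54_polar (cell 0 0) (cell 4 3); rewrite !gram_sq54 /=; lra.
have o2 : G (cell 1 2) (cell 3 3) = 0.
  rewrite gramC -gram54_alias.
  by have := gram54_polar (cell 3 3) (cell 4 3); rewrite !gram_sq54 /=; lra.
have o3 : G (cell 1 0) (cell 4 3) = 0.
  rewrite gram54_alias; have := gramC C (cell 1 0) (cell 1 2).
  by have := gram54_polar (cell 1 0) (cell 1 2); rewrite !gram_sq54 /=; lra.
case: s st => [[|[|[|[|[|[|[|[|[|[|[|//]]]]]]]]]]] ?];
case: t => [[|[|[|[|[|[|[|[|[|[|[|//]]]]]]]]]]] ?] //= _; rewrite /cells54 /=.
all: match goal with
  |- G (@Ordinal _ ?i _, @Ordinal _ ?j _)
       (@Ordinal _ ?k _, @Ordinal _ ?l _) = _ =>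
  have := gram54_polar (cell i j) (cell k l); rewrite !gram_sq54 /=;
  have := gramC C (cell i j) (cell k l); have := gramC C (cell i l) (cell k j);
  try have [? ?] := @gram54_eq0 (cell i l) (cell k j) erefl;
  try have [? ?] := @gram54_eq0 (cell k j) (cell i l) erefl;
  lra
end.
Qed.

End P54Gram.

Theorem corollary5p2 (R : realType) :
  BSR_ge R 5 4 11 /\
  [/\ is_biquadratic (@P54 R), is_sos_r (@P54 R) 11 & sos_rank_ge (@P54 R) 11].
Proof.
have sos11 : is_sos_r (@P54 R) 11 by exists (@sq54 R); exact: sos_repr_sq54.
have rank11 : sos_rank_ge (@P54 R) 11.
  by apply: (sos_rank_ge_orthonormal_cells (cell := cells54)); exact: gram54_cells.
have biq := sos_r_biquadratic sos11.
by split; [exists (@P54 R); split => //; exists 11%N | split].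
Qed.
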